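(* Let $W$ be a subset of a metric space $(X,d)$ and suppose that the density $\operatorname{den}(W)$ is a cardinal of uncountable cofinality. Then there exists $\varepsilon_0>0$ such that for all $\varepsilon\in\,]0,\varepsilon_0[$, $$\hat{\mathcal N}^X_\varepsilon(W)=\hat{\mathcal N}_\varepsilon(W)=\hat{\mathcal M}_\varepsilon(W)=\mathcal M^*_\varepsilon(W)=\operatorname{den}(W).$$
   Context: $\operatorname{den}(W)$ is the minimal cardinality of a dense subset of the metric subspace $W$. The cofinality of a cardinal (initial ordinal) $\beta$ is the least ordinal $\alpha$ admitting a strictly increasing map $f:\alpha\to\beta$ whose range is cofinal in $\beta$. Closed balls: $B(c,r)=\{x:d(x,c)\le r\}$; $C$ is an $\varepsilon$-net for $W$ if $W\subseteq\bigcup_{c\in C}B(c,\varepsilon)$; $A$ is $\varepsilon$-distinguishable if $d(x,y)>\varepsilon$ for distinct $x,y\in A$. $\hat{\mathcal N}^A_\varepsilon(W)$ is the minimal cardinality of an $\varepsilon$-net $C\subseteq A$ for $W$; $\hat{\mathcal N}_\varepsilon(W):=\hat{\mathcal N}^W_\varepsilon(W)$; $\hat{\mathcal M}_\varepsilon(W)$ is the smallest cardinality of an $\varepsilon$-distinguishable $A\subseteq W$ that is maximal under inclusion among $\varepsilon$-distinguishable subsets of $W$; $\mathcal M^*_\varepsilon(W)$ is the smallest cardinal $\ge\operatorname{card}(A)$ for every $\varepsilon$-distinguishable $A\subseteq W$. *)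

From Stdlib Require Import Reals.
Open Scope R_scope.

Definition card_le (A B : Type) : Prop :=
  exists f : A -> B, forall x y, f x = f y -> x = y.
Definition card_eq (A B : Type) : Prop :=
  exists (f : A -> B) (g : B -> A), (forall x, g (f x) = x) /\ (forall y, f (g y) = y).
Definition card_lt (A B : Type) : Prop := card_le A B /\ ~ card_le B A.
Definition countable (A : Type) : Prop := card_le A nat.

Definition subset_of {X : Type} (P : X -> Prop) : Type := {x : X | P x}.
Definition included {X : Type} (P Q : X -> Prop) : Prop := forall x, P x -> Q x.

Section Metric.
Variable M : Metric_Space.
Notation X := (Base M).
Notation d := (dist M).

Definition dense_in (W D : X -> Prop) : Prop :=
  included D W /\
  forall x, W x -> forall r, 0 < r -> exists y, D y /\ d x y < r.

(* K has cardinality den(W): the minimal cardinality of a dense subset of W *)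
Definition is_den (W : X -> Prop) (K : Type) : Prop :=
  exists D, dense_in W D /\ card_eq K (subset_of D) /\
    forall D', dense_in W D' -> card_le (subset_of D) (subset_of D').

Definition is_net (A W : X -> Prop) (eps : R) (C : X -> Prop) : Prop :=
  included C A /\ forall w, W w -> exists c, C c /\ d w c <= eps.

Definition is_Nhat (A W : X -> Prop) (eps : R) (K : Type) : Prop :=
  exists C, is_net A W eps C /\ card_eq K (subset_of C) /\
    forall C', is_net A W eps C' -> card_le (subset_of C) (subset_of C').

Definition distinguishable (W : X -> Prop) (eps : R) (A : X -> Prop) : Prop :=
  included A W /\ forall x y, A x -> A y -> x <> y -> eps < d x y.

Definition maximal_distinguishable (W : X -> Prop) (eps : R) (A : X -> Prop) : Prop :=
  distinguishable W eps A /\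
  forall A', distinguishable W eps A' -> included A A' -> included A' A.

Definition is_Mhat (W : X -> Prop) (eps : R) (K : Type) : Prop :=
  exists A, maximal_distinguishable W eps A /\ card_eq K (subset_of A) /\
    forall A', maximal_distinguishable W eps A' -> card_le (subset_of A) (subset_of A').

Definition is_Mstar (W : X -> Prop) (eps : R) (K : Type) : Prop :=
  (forall A, distinguishable W eps A -> card_le (subset_of A) K) /\
  (forall T : Type,
     (forall A, distinguishable W eps A -> card_le (subset_of A) T) -> card_le K T).

End Metric.

Definition strict_wellorder {T : Type} (R0 : T -> T -> Prop) : Prop :=
  (forall x y z, R0 x y -> R0 y z -> R0 x z) /\
  (forall x y, R0 x y \/ x = y \/ R0 y x) /\
  well_founded R0.

Definition initial_ordinal {B : Type} (Rb : B -> B -> Prop) : Prop :=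
  strict_wellorder Rb /\ forall b, card_lt {y : B | Rb y b} B.

Definition uncountable_cofinality {B : Type} (Rb : B -> B -> Prop) : Prop :=
  forall (A : Type) (Ra : A -> A -> Prop) (f : A -> B),
    strict_wellorder Ra -> countable A ->
    (forall a a', Ra a a' -> Rb (f a) (f a')) ->
    ~ (forall b, exists a, b = f a \/ Rb b (f a)).

From Stdlib Require Import Reals Lra Lia Classical ClassicalEpsilon ProofIrrelevance
  FunctionalExtensionality Cantor.
From mathcomp Require ssreflect ssrfun ssrbool eqtype boolp classical_sets functions
  cardinality.
From Pilot Require Import Defs.

Lemma card_le_refl (A : Type) : card_le A A.
Proof. exists (fun x => x); auto. Qed.

Lemma card_le_trans (A B C : Type) : card_le A B -> card_le B C -> card_le A C.
Proof. intros [f Hf] [g Hg]; exists (fun x => g (f x)); auto. Qed.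

Lemma card_eq_le (A B : Type) : card_eq A B -> card_le A B.
Proof.
  intros [f [g [gf fg]]]; exists f; intros x y E.
  now rewrite <- (gf x), <- (gf y), E.
Qed.

Lemma card_eq_ge (A B : Type) : card_eq A B -> card_le B A.
Proof.
  intros [f [g [gf fg]]]; exists g; intros x y E.
  now rewrite <- (fg x), <- (fg y), E.
Qed.

Lemma empty_card_le (A C : Type) : ~ inhabited A -> card_le A C.
Proof.
  intro NA. exists (fun a => False_rect C (NA (inhabits a))).
  intro a; destruct (NA (inhabits a)).
Qed.

Lemma sig_eq {A : Type} (P : A -> Prop) (u v : sig P) : proj1_sig u = proj1_sig v -> u = v.
Proof. apply eq_sig_hprop; intros; apply proof_irrelevance. Qed.

Lemma card_le_of_relation (A C : Type) (rel : A -> C -> Prop) :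
  (forall a, exists c, rel a c) -> (forall a a' c, rel a c -> rel a' c -> a = a') ->
  card_le A C.
Proof.
  intros Htot Huniq. destruct (choice rel Htot) as [f Hf].
  exists f; intros a a' E. apply (Huniq a a' (f a)); [apply Hf | rewrite E; apply Hf].
Qed.

Module ClassicalSetsFacts.
Import ssreflect ssrfun ssrbool eqtype boolp classical_sets functions cardinality.

Lemma card_le_setT (A B : Type) : Defs.card_le A B -> ([set: A] #<= [set: B])%card.
Proof.
move=> [f finj]; have [g] : squashed {injfun [set: A] >-> [set: B]}.
  by apply/injfunPex; exists f => // x y _ _; exact: finj.
exact: inj_card_le.
Qed.

Lemma setT_card_eq (A B : Type) : ([set: A] #= [set: B])%card -> Defs.card_eq A B.
Proof.
pose inT (T : Type) (x : T) : [set: T]%classic := SigSub (mem_set (I : setT x)).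
have inTK (T : Type) (u : [set: T]%classic) : inT T (val u) = u by exact: val_inj.
move=> /card_bijP[f [g fK gK]].
exists (fun a => val (f (inT A a))), (fun b => val (g (inT B b))).
by split=> [a|b]; rewrite inTK ?fK ?gK.
Qed.

Lemma Schroeder_Bernstein (A B : Type) :
  Defs.card_le A B -> Defs.card_le B A -> Defs.card_eq A B.
Proof.
by move=> /card_le_setT AB /card_le_setT BA; apply/setT_card_eq/Cantor_Bernstein.
Qed.

Lemma Zorn_subsets (T : Type) (P : (T -> Prop) -> Prop) :
  (forall F : (T -> Prop) -> Prop, (forall A, F A -> P A) ->
     (forall A A', F A -> F A' -> Defs.included A A' \/ Defs.included A' A) ->
     P (fun x => exists A, F A /\ A x)) ->
  exists A, P A /\ forall A', P A' -> Defs.included A A' -> Defs.included A' A.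
Proof.
move=> Pchain; have [|A [PA Amax]] := Zorn_bigcup (P := P).
  move=> F FP Ftot.
  have -> : (\bigcup_(X in F) X)%classic = (fun x => exists A, F A /\ A x).
    apply/funext => x; apply/propext; split.
      by case=> A FA Ax; exists A.
    by case=> A [FA Ax]; exists A.
  by apply: Pchain => // A A' FA FA'; exact: Ftot.
exists A; split=> // A' PA' AA'; apply: contrapT => nA'A.
exact: Amax A' (conj AA' nA'A) PA'.
Qed.

End ClassicalSetsFacts.
Import ClassicalSetsFacts.

Section InitialOrdinal.
Variables (B : Type) (Rb : B -> B -> Prop).
Hypothesis Hinit : initial_ordinal Rb.
Hypothesis Hcf : uncountable_cofinality Rb.

Lemma Rb_trans x y z : Rb x y -> Rb y z -> Rb x z.
Proof. exact (proj1 (proj1 Hinit) x y z). Qed.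

Lemma Rb_total x y : Rb x y \/ x = y \/ Rb y x.
Proof. exact (proj1 (proj2 (proj1 Hinit)) x y). Qed.

Lemma Rb_wf : well_founded Rb.
Proof. exact (proj2 (proj2 (proj1 Hinit))). Qed.

Lemma Rb_irrefl x : ~ Rb x x.
Proof. induction (Rb_wf x) as [x _ IH]. intro H. exact (IH x H H). Qed.

Lemma Rb_le_lt_trans x y z : (x = y \/ Rb x y) -> Rb y z -> Rb x z.
Proof. intros [E|E] H; [now subst | exact (Rb_trans _ _ _ E H)]. Qed.

Definition seg (b : B) : Type := {y : B | Rb y b}.

Lemma B_not_le_seg b : ~ card_le B (seg b).
Proof. exact (proj2 (proj2 Hinit b)). Qed.

Lemma least_element (P : B -> Prop) :
  (exists x, P x) -> exists x, P x /\ forall y, P y -> ~ Rb y x.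
Proof.
  intros [x0 H0]. apply NNPP; intro N. revert H0.
  induction (Rb_wf x0) as [x _ IH]. intros Px. apply N. exists x. split; auto.
  intros y Py Ry. exact (IH y Ry Py).
Qed.

(* A maximal element would give a cofinal map from the one-point ordinal. *)
Lemma no_maximum b : exists y, Rb b y.
Proof.
  apply NNPP; intro N.
  apply (Hcf unit (fun _ _ => False) (fun _ => b)).
  - split; [tauto | split].
    + intros [] []; auto.
    + intro. constructor; intros ? [].
  - exists (fun _ => 0%nat). intros [] [] _; auto.
  - intros ? ? [].
  - intro y. exists tt. destruct (Rb_total y b) as [H|[H|H]]; auto.
    exfalso; apply N; eauto.
Qed.

Definition succ (b : B) : B :=
  epsilon (inhabits b) (fun y => Rb b y /\ forall z, Rb b z -> z = y \/ Rb y z).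

(* succ is well defined because B has no maximum. *)
Lemma succ_spec b : Rb b (succ b) /\ forall z, Rb b z -> z = succ b \/ Rb (succ b) z.
Proof.
  unfold succ. apply epsilon_spec.
  destruct (least_element (fun y => Rb b y) (no_maximum b)) as [y [H1 H2]].
  exists y. split; auto. intros z Hz. destruct (Rb_total y z) as [H|[H|H]]; auto.
  exfalso; exact (H2 z Hz H).
Qed.

Lemma succ_gt b : Rb b (succ b).
Proof. apply succ_spec. Qed.

Lemma succ_least b z : Rb b z -> z = succ b \/ Rb (succ b) z.
Proof. apply succ_spec. Qed.

Lemma succ_mono x y : Rb x y -> Rb (succ x) (succ y).
Proof.
  intro H. apply (Rb_le_lt_trans _ y); [| apply succ_gt].
  destruct (succ_least x y H); auto.
Qed.

Lemma succ_inj x y : succ x = succ y -> x = y.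
Proof.
  intro E. destruct (Rb_total x y) as [H|[H|H]]; auto; exfalso;
    apply succ_mono in H; rewrite E in H; exact (Rb_irrefl _ H).
Qed.

Definition iter_succ (n : nat) (x : B) : B := Nat.iter n succ x.

Lemma iter_succ_mono n x y : Rb x y -> Rb (iter_succ n x) (iter_succ n y).
Proof. induction n; simpl; auto. intro H. apply succ_mono; auto. Qed.

Lemma iter_succ_ge n x : x = iter_succ n x \/ Rb x (iter_succ n x).
Proof.
  induction n; simpl; auto. right.
  apply (Rb_le_lt_trans _ (iter_succ n x)); [exact IHn | apply succ_gt].
Qed.

(* Limit points (including the least element): those not of the form succ y. *)
Definition not_successor (l : B) : Prop := ~ exists y, succ y = l.

Lemma succ_decomposition x : exists k l, not_successor l /\ x = iter_succ k l.
Proof.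
  induction (Rb_wf x) as [x _ IH].
  destruct (classic (exists y, succ y = x)) as [[y Hy]|N].
  - subst x. destruct (IH y (succ_gt y)) as [k [l [Hl E]]].
    exists (S k), l. split; auto. simpl. now f_equal.
  - exists 0%nat, x. split; auto.
Qed.

Lemma succ_decomposition_unique k l j m :
  not_successor l -> not_successor m -> iter_succ k l = iter_succ j m -> k = j /\ l = m.
Proof.
  intros Hl Hm. revert j. induction k; intros j E; destruct j; simpl in *.
  - auto.
  - exfalso; apply Hl; eauto.
  - exfalso; apply Hm; eauto.
  - apply succ_inj in E. destruct (IHk j E); auto.
Qed.

Lemma increasing_sequence_bounded (c : nat -> B) :
  (forall n, Rb (c n) (c (S n))) -> exists b, forall n, Rb (c n) b.
Proof.
  intro Hc.
  assert (Hinc : forall a a', (a < a')%nat -> Rb (c a) (c a')).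
  { intros a a' H. induction H; auto. exact (Rb_trans _ _ _ IHle (Hc m)). }
  assert (Hw : strict_wellorder lt).
  { split; [intros; lia | split; [intros; lia | apply Wf_nat.lt_wf]]. }
  pose proof (Hcf nat lt c Hw (card_le_refl nat) Hinc) as H.
  apply not_all_ex_not in H. destruct H as [b Hb]. exists b. intro n.
  destruct (Rb_total (c n) b) as [H|[H|H]]; auto; exfalso; apply Hb; exists n; auto.
Qed.

Definition maxB (x y : B) : B := if excluded_middle_informative (Rb x y) then y else x.

Lemma maxB_l x y : x = maxB x y \/ Rb x (maxB x y).
Proof. unfold maxB; destruct (excluded_middle_informative _); auto. Qed.

Lemma maxB_r x y : y = maxB x y \/ Rb y (maxB x y).
Proof.
  unfold maxB; destruct (excluded_middle_informative _); auto.
  destruct (Rb_total x y) as [H|[H|H]]; auto; contradiction.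
Qed.

Lemma sequence_bounded (b : nat -> B) : exists c, forall n, Rb (b n) c.
Proof.
  set (c := fix c n := match n with
                       | O => succ (b O)
                       | S n => succ (maxB (c n) (b (S n))) end).
  destruct (increasing_sequence_bounded c) as [z Hz].
  - intro n. apply (Rb_le_lt_trans _ (maxB (c n) (b (S n)))); [apply maxB_l | apply succ_gt].
  - exists z. intro n. apply (Rb_trans _ (c n)); auto. destruct n; simpl.
    + apply succ_gt.
    + apply (Rb_le_lt_trans _ (maxB (c n) (b (S n)))); [apply maxB_r | apply succ_gt].
Qed.

(* nat x seg b injects into a larger segment: send (m, succ^k l) to
   succ^<m,k> l, which stays below the supremum of the succ^n b. *)
Lemma nat_times_seg_le_seg b : exists c, card_le (nat * seg b) (seg c).
Proof.
  destruct (increasing_sequence_bounded (fun n => iter_succ n b)) as [c Hc].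
  { intro n. apply succ_gt. }
  exists c.
  assert (Hdec : forall x, exists p : nat * B,
             not_successor (snd p) /\ x = iter_succ (fst p) (snd p)).
  { intro x. destruct (succ_decomposition x) as [k [l H]]. now exists (k, l). }
  destruct (choice _ Hdec) as [dec Hd].
  assert (Hbelow : forall (p : nat * seg b) j, Rb (iter_succ j (snd (dec (proj1_sig (snd p))))) c).
  { intros [m [x Hx]] j. apply (Rb_trans _ (iter_succ j b)); auto. apply iter_succ_mono.
    apply (Rb_le_lt_trans _ x); auto. simpl. destruct (Hd x) as [_ E].
    assert (G := iter_succ_ge (fst (dec x)) (snd (dec x))). now rewrite <- E in G. }
  exists (fun p => exist (fun y => Rb y c) _
                     (Hbelow p (to_nat (fst p, fst (dec (proj1_sig (snd p))))))).
  intros [m [x Hx]] [m' [x' Hx']] E.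
  apply (f_equal (@proj1_sig _ _)) in E. cbn [proj1_sig fst snd] in E.
  destruct (Hd x) as [N1 E1]. destruct (Hd x') as [N2 E2].
  destruct (succ_decomposition_unique _ _ _ _ N1 N2 E) as [K L].
  apply (f_equal of_nat) in K. rewrite !cancel_of_to in K. injection K; intros K2 K1.
  subst m'. f_equal. apply sig_eq. simpl. now rewrite E1, E2, K2, L.
Qed.

(* A type into which B does not inject lies inside some initial segment:
   otherwise transfinite recursion builds an injection of B into it. *)
Lemma small_le_seg (A : Type) : ~ card_le B A -> exists b, card_le A (seg b).
Proof.
  intro HBA. apply NNPP; intro N.
  assert (inhA : inhabited A).
  { apply NNPP; intro NA. apply HBA.
    assert (NB : forall b : B, False) by (intro b; exact (N (ex_intro _ b (empty_card_le A _ NA)))).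
    exists (fun b => False_rect A (NB b)). intro b; destruct (NB b). }
  set (F := fun (x : B) (h : forall y, Rb y x -> A) =>
              epsilon inhA (fun a => forall y (H : Rb y x), a <> h y H)).
  set (h := Fix Rb_wf (fun _ => A) F).
  assert (Hh : forall x, h x = F x (fun y _ => h y)).
  { intro x. apply (Fix_eq Rb_wf (fun _ => A) F). intros x0 f g Hfg.
    replace f with g; [reflexivity|].
    apply functional_extensionality_dep; intro y.
    apply functional_extensionality_dep; intro p. auto. }
  assert (Hfresh : forall x y, Rb y x -> h x <> h y).
  { intro x. rewrite Hh. apply (epsilon_spec inhA (fun a => forall y (H : Rb y x), a <> h y)).
    apply NNPP; intro NE. apply N. exists x.
    apply (card_le_of_relation A (seg x) (fun a y => a = h (proj1_sig y))).
    - intro a. apply NNPP; intro Na. apply NE. exists a. intros y Hy E. apply Na.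
      now exists (exist _ y Hy).
    - intros a a' y -> ->. reflexivity. }
  apply HBA. exists h. intros x y E.
  destruct (Rb_total x y) as [H|[H|H]]; auto; exfalso.
  - exact (Hfresh y x H (eq_sym E)).
  - exact (Hfresh x y H E).
Qed.

Theorem countable_union_small (A : nat -> Type) :
  (forall n, ~ card_le B (A n)) -> ~ card_le B {n : nat & A n}.
Proof.
  intros HA HU.
  destruct (choice _ (fun n => small_le_seg (A n) (HA n))) as [bs Hbs].
  destruct (sequence_bounded bs) as [c Hc].
  assert (Hinj : forall n, exists i : A n -> seg c, forall x y, i x = i y -> x = y).
  { intro n. destruct (Hbs n) as [i Hi].
    exists (fun a => exist (fun y => Rb y c) (proj1_sig (i a))
                       (Rb_trans _ _ _ (proj2_sig (i a)) (Hc n))).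
    intros x y E. apply Hi, sig_eq. exact (f_equal (@proj1_sig _ _) E). }
  set (i := fun n => proj1_sig (constructive_indefinite_description _ (Hinj n))).
  assert (Hi : forall n x y, i n x = i n y -> x = y).
  { intro n. exact (proj2_sig (constructive_indefinite_description _ (Hinj n))). }
  destruct (nat_times_seg_le_seg c) as [c' Hc'].
  apply (B_not_le_seg c').
  apply (card_le_trans _ _ _ HU), (card_le_trans _ (nat * seg c)), Hc'.
  exists (fun p => (projT1 p, i (projT1 p) (projT2 p))).
  intros [n a] [n' a'] E. simpl in E. injection E; intros E2 E1. subst n'.
  apply Hi in E2. now subst.
Qed.

End InitialOrdinal.

Section Metric.
Variable M : Metric_Space.
Notation X := (Base M).
Notation d := (dist M).
Open Scope R_scope.

Definition covers (W C : X -> Prop) (r : R) : Prop :=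
  forall w, W w -> exists c, C c /\ d w c <= r.

Lemma net_covers (A W C : X -> Prop) (r : R) : is_net M A W r C -> covers W C r.
Proof. intros [_ H]; exact H. Qed.

(* Maximal eps-distinguishable subsets of W exist, by Zorn's lemma: the union of
   a chain of eps-distinguishable sets is eps-distinguishable. *)
Lemma maximal_distinguishable_exists (W : X -> Prop) (eps : R) :
  exists A, maximal_distinguishable M W eps A.
Proof.
  destruct (Zorn_subsets X (distinguishable M W eps)) as [A [HA Amax]].
  - intros F HF Hchain. split.
    + intros x [A [FA Ax]]. exact (proj1 (HF A FA) x Ax).
    + intros x y [A [FA Ax]] [A' [FA' Ay]] Nxy.
      destruct (Hchain A A' FA FA') as [H|H].
      * exact (proj2 (HF A' FA') x y (H x Ax) Ay Nxy).
      * exact (proj2 (HF A FA) x y Ax (H y Ay) Nxy).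
  - exists A. split; auto.
Qed.

Lemma maximal_distinguishable_covers (W A : X -> Prop) (eps : R) :
  0 <= eps -> maximal_distinguishable M W eps A -> covers W A eps.
Proof.
  intros He [[HAW HAsep] Hmax] x Wx. apply NNPP; intro N.
  assert (Hfar : forall a, A a -> eps < d x a).
  { intros a Aa. apply Rnot_le_lt. intro; apply N; eauto. }
  assert (Ax : A x).
  { apply (Hmax (fun y => A y \/ y = x)); [split | intros y Ay; auto | auto].
    - intros y [Ay | ->]; auto.
    - intros y z [Ay | ->] [Az | ->] Nyz; auto.
      + rewrite dist_sym; auto.
      + contradiction. }
  apply N. exists x. split; auto. rewrite (proj2 (dist_refl M x x) eq_refl). lra.
Qed.

Lemma dense_covers (W D : X -> Prop) (r : R) : dense_in M W D -> 0 < r -> covers W D r.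
Proof.
  intros [_ HD] Hr w Ww. destruct (HD w Ww r Hr) as [y [Dy Hy]].
  exists y. split; auto. lra.
Qed.

(* Packing vs covering: a k-distinguishable set injects into any r-net once 2r <= k,
   since two of its points sharing a nearby net point would be 2r-close. *)
Lemma distinguishable_le_cover (W A C : X -> Prop) (k r : R) :
  distinguishable M W k A -> covers W C r -> 2 * r <= k ->
  card_le (subset_of A) (subset_of C).
Proof.
  intros [HAW HAsep] HC Hkr.
  apply (card_le_of_relation _ _ (fun a c => d (proj1_sig a) (proj1_sig c) <= r)).
  - intros [a Aa]. destruct (HC a (HAW a Aa)) as [c [Cc Hc]]. now exists (exist _ c Cc).
  - intros [a Aa] [a' Aa'] [c Cc] Ha Ha'. simpl in *. apply sig_eq; simpl.
    apply NNPP; intro Naa'.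
    assert (Hsep := HAsep a a' Aa Aa' Naa').
    assert (Htri := dist_tri M a a' c). rewrite (dist_sym M c a') in Htri. lra.
Qed.

Lemma union_of_nets_dense (W : X -> Prop) (Cs : nat -> X -> Prop) :
  (forall n, included (Cs n) W) -> (forall n, covers W (Cs n) (/ INR (S n))) ->
  dense_in M W (fun x => exists n, Cs n x).
Proof.
  intros HCW HC. split.
  - intros x [n Hx]. exact (HCW n x Hx).
  - intros x Wx r Hr. destruct (archimed_cor1 r Hr) as [[|n] [Hn Hpos]]; [lia|].
    destruct (HC n x Wx) as [c [Cc Hc]]. exists c. split; [now exists n | lra].
Qed.

Lemma union_le_sigma (Cs : nat -> X -> Prop) :
  card_le (subset_of (fun x => exists n, Cs n x)) {n : nat & subset_of (Cs n)}.
Proof.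
  apply (card_le_of_relation _ {n : nat & subset_of (Cs n)}
           (fun x p => proj1_sig x = proj1_sig (projT2 p))).
  - intros [x [n Hx]]. now exists (existT _ n (exist _ x Hx)).
  - intros x x' p E E'. apply sig_eq. congruence.
Qed.

Lemma is_Nhat_of_bounds (A W C0 : X -> Prop) (eps : R) (K : Type) :
  is_net M A W eps C0 -> card_le (subset_of C0) K ->
  (forall C, covers W C eps -> card_le K (subset_of C)) -> is_Nhat M A W eps K.
Proof.
  intros HC0 HC0K Hnet. exists C0. split; [exact HC0 | split].
  - apply Schroeder_Bernstein; [apply Hnet, (net_covers A) | ]; assumption.
  - intros C HC. apply (card_le_trans _ _ _ HC0K), Hnet, (net_covers A), HC.
Qed.

Lemma is_Mhat_of_bounds (W A0 : X -> Prop) (eps : R) (K : Type) :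
  0 <= eps -> maximal_distinguishable M W eps A0 -> card_le (subset_of A0) K ->
  (forall C, covers W C eps -> card_le K (subset_of C)) -> is_Mhat M W eps K.
Proof.
  intros He HA0 HA0K Hnet. exists A0. split; [exact HA0 | split].
  - apply Schroeder_Bernstein; [apply Hnet, maximal_distinguishable_covers |]; assumption.
  - intros A HA. apply (card_le_trans _ _ _ HA0K), Hnet, maximal_distinguishable_covers; assumption.
Qed.

Lemma is_Mstar_of_bounds (W A0 : X -> Prop) (eps : R) (K : Type) :
  distinguishable M W eps A0 -> card_le K (subset_of A0) ->
  (forall A, distinguishable M W eps A -> card_le (subset_of A) K) -> is_Mstar M W eps K.
Proof.
  intros HA0 HKA0 Hpack. split; [exact Hpack |].
  intros T HT. exact (card_le_trans _ _ _ HKA0 (HT A0 HA0)).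
Qed.

Section Density.
Variables (W : X -> Prop) (B : Type) (Rb : B -> B -> Prop).
Hypothesis HB : is_den M W B.
Hypothesis Hinit : initial_ordinal Rb.
Hypothesis Hcf : uncountable_cofinality Rb.

Lemma den_le_dense (D : X -> Prop) : dense_in M W D -> card_le B (subset_of D).
Proof.
  intro HD. destruct HB as [D0 [_ [HBD0 Hmin]]].
  exact (card_le_trans _ _ _ (card_eq_le _ _ HBD0) (Hmin D HD)).
Qed.

Lemma distinguishable_le_den (A : X -> Prop) (eps : R) :
  0 < eps -> distinguishable M W eps A -> card_le (subset_of A) B.
Proof.
  intros He HA. destruct HB as [D0 [HD0 [HBD0 _]]].
  apply (card_le_trans _ (subset_of D0)); [| exact (card_eq_ge _ _ HBD0)].
  apply (distinguishable_le_cover W A D0 eps (eps / 2)); [exact HA | | lra].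
  apply dense_covers; [exact HD0 | lra].
Qed.

(* Otherwise maximal 1/(n+1)-distinguishable sets A_n, each
   smaller than den(W), would have a dense union, against countable_union_small. *)
Lemma den_scale :
  exists k, 0 < k /\
    forall A, maximal_distinguishable M W k A -> card_le B (subset_of A).
Proof.
  apply NNPP; intro N.
  assert (Hsmall : forall n, exists A,
             maximal_distinguishable M W (/ INR (S n)) A /\ ~ card_le B (subset_of A)).
  { intro n. apply NNPP; intro Nn. apply N. exists (/ INR (S n)). split.
    - apply Rinv_0_lt_compat, lt_0_INR; lia.
    - intros A HA. apply NNPP; intro NA. apply Nn. eauto. }
  destruct (choice _ Hsmall) as [As HAs].
  assert (Hdense : dense_in M W (fun x => exists n, As n x)).
  { apply union_of_nets_dense.
    - intro n. exact (proj1 (proj1 (proj1 (HAs n)))).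
    - intro n. apply maximal_distinguishable_covers; [| exact (proj1 (HAs n))].
      left; apply Rinv_0_lt_compat, lt_0_INR; lia. }
  apply (countable_union_small B Rb Hinit Hcf (fun n => subset_of (As n)) (fun n => proj2 (HAs n))).
  exact (card_le_trans _ _ _ (den_le_dense _ Hdense) (union_le_sigma As)).
Qed.

(* Consequently every net at a scale at most k/2 has at least den(W) points: it
   dominates a maximal k-distinguishable set. *)
Lemma den_le_fine_covers :
  exists k, 0 < k /\
    forall eps C, 2 * eps <= k -> covers W C eps -> card_le B (subset_of C).
Proof.
  destruct den_scale as [k [Hk Hscale]]. exists k. split; [exact Hk |].
  intros eps C Heps HC. destruct (maximal_distinguishable_exists W k) as [A HA].
  apply (card_le_trans _ _ _ (Hscale A HA)).
  exact (distinguishable_le_cover W A C k eps (proj1 HA) HC Heps).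
Qed.

End Density.
End Metric.

Theorem theorem2p10 (M : Metric_Space) (W : Base M -> Prop)
  (B : Type) (Rb : B -> B -> Prop)
  (HB : is_den M W B) (Hinit : initial_ordinal Rb) (Hcf : uncountable_cofinality Rb) :
  exists eps0 : R, 0 < eps0 /\
    forall eps : R, 0 < eps < eps0 ->
      is_Nhat M (fun _ => True) W eps B /\
      is_Nhat M W W eps B /\
      is_Mhat M W eps B /\
      is_Mstar M W eps B.
Proof.
  destruct (den_le_fine_covers M W B Rb HB Hinit Hcf) as [k [Hk Hnet]].
  exists (k / 2). split; [lra |]. intros eps [Heps Heps0].
  assert (Hnet_eps : forall C, covers M W C eps -> card_le B (subset_of C)).
  { intros C; apply Hnet; lra. }
  assert (Hpack := fun A => distinguishable_le_den M W B HB A eps Heps).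
  (* a maximal eps-distinguishable set is both a net and a packing *)
  destruct (maximal_distinguishable_exists M W eps) as [A0 HA0].
  assert (HA0cov : covers M W A0 eps).
  { apply maximal_distinguishable_covers; [lra | exact HA0]. }
  assert (HA0B := Hpack A0 (proj1 HA0)).
  split; [| split; [| split]].
  - apply (is_Nhat_of_bounds M _ W A0); [| exact HA0B | exact Hnet_eps].
    split; [intros ? ?; exact I | exact HA0cov].
  - apply (is_Nhat_of_bounds M _ W A0); [| exact HA0B | exact Hnet_eps].
    split; [exact (proj1 (proj1 HA0)) | exact HA0cov].
  - exact (is_Mhat_of_bounds M W A0 eps B (Rlt_le _ _ Heps) HA0 HA0B Hnet_eps).
  - exact (is_Mstar_of_bounds M W A0 eps B (proj1 HA0) (Hnet_eps A0 HA0cov) Hpack).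
Qed.
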